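(* Consider the two-species BGK system and its mild solutions as described in the context, under the assumptions listed there. Let $(f_1,f_2)$ with $f_1,f_2\ge0$ be a mild solution with positive initial data $f_1^0,f_2^0>0$. Then $f_1,f_2>0$ almost everywhere.
   Context: Fix $N\ge1$, masses $m_1,m_2>0$, $\varepsilon\in(0,1]$, $\alpha\in[0,1]$, $\delta$ with $\frac{\frac{m_1}{m_2}\varepsilon-1}{1+\frac{m_1}{m_2}\varepsilon}\le\delta\le 1$, and $\gamma$ with $0\le\gamma\le\frac{m_1}{N}(1-\delta)\big[(1+\frac{m_1}{m_2}\varepsilon)\delta+1-\frac{m_1}{m_2}\varepsilon\big]$. For $f_k(x,v,t)\ge0$ define $n_k=\int f_k\,dv$, $n_ku_k=\int vf_k\,dv$, $Nn_kT_k=\int m_k|v-u_k|^2f_k\,dv$, and $u_{12}=\delta u_1+(1-\delta)u_2$, $u_{21}=u_2-\frac{m_1}{m_2}\varepsilon(1-\delta)(u_2-u_1)$, $T_{12}=\alpha T_1+(1-\alpha)T_2+\gamma|u_1-u_2|^2$, $T_{21}=\big[\frac1N\varepsilon m_1(1-\delta)(\frac{m_1}{m_2}\varepsilon(\delta-1)+\delta+1)-\varepsilon\gamma\big]|u_1-u_2|^2+\varepsilon(1-\alpha)T_1+(1-\varepsilon(1-\alpha))T_2$. Maxwellians: $M_k=\frac{n_k}{(2\pi T_k/m_k)^{N/2}}e^{-\frac{|v-u_k|^2}{2T_k/m_k}}$, $M_{12}=\frac{n_1}{(2\pi T_{12}/m_1)^{N/2}}e^{-\frac{|v-u_{12}|^2}{2T_{12}/m_1}}$,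 $M_{21}=\frac{n_2}{(2\pi T_{21}/m_2)^{N/2}}e^{-\frac{|v-u_{21}|^2}{2T_{21}/m_2}}$. The system is $\partial_tf_1+v\cdot\nabla_xf_1=\nu_{11}n_1(M_1-f_1)+\nu_{12}n_2(M_{12}-f_1)$, $\partial_tf_2+v\cdot\nabla_xf_2=\nu_{22}n_2(M_2-f_2)+\nu_{21}n_1(M_{21}-f_2)$, $f_k(t=0)=f_k^0$. Assumptions: (1) periodicity in $x$ with periods $a_1,\dots,a_N>0$ for solutions and initial data, spatial domain $\Lambda=\{x: x_i\in(0,a_i)\}$; (2) $f_k^0\ge0$, $(1+|v|^2)f_k^0\in L^1(\Lambda\times\mathbb{R}^N)$, $\int\!\!\int f_k^0\,dv\,dx=1$; (3) $\sup_{x,v}f_k^0(x,v)(1+|v|^q)=\frac12A_0<\infty$ for some $q>N+2$; (4) $\gamma_k(x,t):=\int f_k^0(x-vt,v)\,dv\ge C_0>0$ for all $t$; (5) $\nu_{jk}n_k=\tilde\nu_{jk}\frac{n_k}{n_1+n_2}$ with constants $\tilde\nu_{jk}>0$. Mild solution: $(f_1,f_2)$ with $f_k\ge0$, $(1+|v|^2)f_k\in L^1$, such that for $k\neq j$, writing $\rho_k=\frac{n_k}{n_1+n_2}$, $y_s=x+(s-t)v$, $f_k(x,v,t)=e^{-a_k(x,v,t)}f_k^0(x-tv,v)+e^{-a_k(x,v,t)}\int_0^t\big[\tilde\nu_{kk}\rho_k(y_s,s)M_k(y_s,v,s)+\tilde\nu_{kj}\rho_j(y_s,s)M_{kj}(y_s,v,s)\big]e^{a_k(y_s,v,s)}\,ds$,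 with $a_k(x,v,t)=\int_0^t\big[\tilde\nu_{kk}\rho_k(y_s,s)+\tilde\nu_{kj}\rho_j(y_s,s)\big]ds$. *)

From mathcomp Require Import all_boot all_order all_algebra all_classical all_reals all_analysis.
Set Implicit Arguments. Unset Strict Implicit. Unset Printing Implicit Defensive.
Import Order.TTheory GRing.Theory Num.Theory.
Local Open Scope classical_set_scope.
Local Open Scope ring_scope.

Section BGK.
Variable R : realType.

Definition vadd {N} (u w : N.-tuple R) : N.-tuple R := [tuple tnth u i + tnth w i | i < N].
Definition vscale {N} (c : R) (u : N.-tuple R) : N.-tuple R := [tuple c * tnth u i | i < N].
Definition vsub {N} (u w : N.-tuple R) : N.-tuple R := vadd u (vscale (-1) w).
Definition vdot {N} (u w : N.-tuple R) : R := \sum_(i < N) tnth u i * tnth w i.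
Definition vsq {N} (u : N.-tuple R) : R := vdot u u.
Definition vnorm {N} (u : N.-tuple R) : R := Num.sqrt (vsq u).
Definition basis {N} (i : 'I_N) : N.-tuple R := [tuple (j == i)%:R | j < N].

(* ---------- Lebesgue integral over R^n (iterated, Tonelli form) ---------- *)
Fixpoint iint (n : nat) : (n.-tuple R -> \bar R) -> \bar R :=
  match n return (n.-tuple R -> \bar R) -> \bar R with
  | 0 => fun h => h [tuple]
  | n'.+1 => fun h =>
      (\int[@lebesgue_measure R]_(x in [set: R])
          iint (fun y : n'.-tuple R => h (cons_tuple x y)))%E
  end.

Definition integ {N} (g : N.-tuple R -> R) : R :=
  fine (iint (fun v => ((Num.max (g v) 0)%:E))) -
  fine (iint (fun v => ((Num.max (- g v) 0)%:E))).

Definition integ0t (t : R) (g : R -> R) : R :=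
  let I := [set` `[0, t]] in
  fine (\int[@lebesgue_measure R]_(s in I) (g s)%:E)%E.

Definition dens {N} (g : N.-tuple R -> R) : R := integ g.
Definition vel {N} (g : N.-tuple R -> R) : N.-tuple R :=
  [tuple (integ (fun v => tnth v i * g v)) / dens g | i < N].
Definition temp {N} (m : R) (g : N.-tuple R -> R) : R :=
  integ (fun v => m * vsq (vsub v (vel g)) * g v) / (N%:R * dens g).

Definition maxw {N} (n : R) (u : N.-tuple R) (T m : R) (v : N.-tuple R) : R :=
  n / (Num.sqrt (2 * pi * T / m)) ^+ N * expR (- vsq (vsub v u) / (2 * T / m)).

Record params := Params {
  pN : nat; m1 : R; m2 : R; eps : R; alpha : R; delta : R; gamma : R;
  nt11 : R; nt12 : R; nt21 : R; nt22 : R }.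

Definition admissible (P : params) : Prop :=
  let r := m1 P / m2 P in
  (1 <= pN P)%N /\ 0 < m1 P /\ 0 < m2 P /\ 0 < eps P <= 1 /\ 0 <= alpha P <= 1 /\
  (r * eps P - 1) / (1 + r * eps P) <= delta P <= 1 /\
  0 <= gamma P <= m1 P / (pN P)%:R * (1 - delta P) *
                   ((1 + r * eps P) * delta P + 1 - r * eps P) /\
  0 < nt11 P /\ 0 < nt12 P /\ 0 < nt21 P /\ 0 < nt22 P.

(* phase-space functions f(x,v,t) and initial data f0(x,v) *)
Definition fun3 N := N.-tuple R -> N.-tuple R -> R -> R.
Definition fun2 N := N.-tuple R -> N.-tuple R -> R.

Section Mild.
Variable P : params.
Let N := pN P.
Variables (f1 f2 : fun3 N).

Definition n1 x t := dens (fun v => f1 x v t).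
Definition n2 x t := dens (fun v => f2 x v t).
Definition u1 x t := vel (fun v => f1 x v t).
Definition u2 x t := vel (fun v => f2 x v t).
Definition T1 x t := temp (m1 P) (fun v => f1 x v t).
Definition T2 x t := temp (m2 P) (fun v => f2 x v t).
Definition rho1 x t := n1 x t / (n1 x t + n2 x t).
Definition rho2 x t := n2 x t / (n1 x t + n2 x t).

Definition u12 x t : N.-tuple R :=
  vadd (vscale (delta P) (u1 x t)) (vscale (1 - delta P) (u2 x t)).
Definition u21 x t : N.-tuple R :=
  vsub (u2 x t) (vscale (m1 P / m2 P * eps P * (1 - delta P)) (vsub (u2 x t) (u1 x t))).
Definition T12 x t : R :=
  alpha P * T1 x t + (1 - alpha P) * T2 x t + gamma P * vsq (vsub (u1 x t) (u2 x t)).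
Definition T21 x t : R :=
  (N%:R^-1 * eps P * m1 P * (1 - delta P) *
     (m1 P / m2 P * eps P * (delta P - 1) + delta P + 1) - eps P * gamma P)
    * vsq (vsub (u1 x t) (u2 x t))
  + eps P * (1 - alpha P) * T1 x t + (1 - eps P * (1 - alpha P)) * T2 x t.

Definition M1 x v t := maxw (n1 x t) (u1 x t) (T1 x t) (m1 P) v.
Definition M2 x v t := maxw (n2 x t) (u2 x t) (T2 x t) (m2 P) v.
Definition M12 x v t := maxw (n1 x t) (u12 x t) (T12 x t) (m1 P) v.
Definition M21 x v t := maxw (n2 x t) (u21 x t) (T21 x t) (m2 P) v.

Definition ychar (x v : N.-tuple R) (t s : R) := vadd x (vscale (s - t) v).

Definition a1 x v t := integ0t t (fun s =>
  nt11 P * rho1 (ychar x v t s) s + nt12 P * rho2 (ychar x v t s) s).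
Definition a2 x v t := integ0t t (fun s =>
  nt22 P * rho2 (ychar x v t s) s + nt21 P * rho1 (ychar x v t s) s).

Definition mild_eqs (f10 f20 : fun2 N) : Prop :=
  forall x v t, 0 <= t ->
  f1 x v t = expR (- a1 x v t) * f10 (vsub x (vscale t v)) v
     + expR (- a1 x v t) * integ0t t (fun s =>
         (nt11 P * rho1 (ychar x v t s) s * M1 (ychar x v t s) v s
          + nt12 P * rho2 (ychar x v t s) s * M12 (ychar x v t s) v s)
         * expR (a1 (ychar x v t s) v s))
  /\
  f2 x v t = expR (- a2 x v t) * f20 (vsub x (vscale t v)) v
     + expR (- a2 x v t) * integ0t t (fun s =>
         (nt22 P * rho2 (ychar x v t s) s * M2 (ychar x v t s) v s
          + nt21 P * rho1 (ychar x v t s) s * M21 (ychar x v t s) v s)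
         * expR (a2 (ychar x v t s) v s)).
End Mild.

Definition cell {N} (a : N.-tuple R) (x : N.-tuple R) : Prop :=
  forall i, 0 < tnth x i < tnth a i.

Definition L1cell {N} (a : N.-tuple R) (g : N.-tuple R -> N.-tuple R -> R) : Prop :=
  measurable_fun [set: N.-tuple R * N.-tuple R] (fun xv => g xv.1 xv.2) /\
  (iint (fun x => iint (fun v => ((\1_(cell a) x : R) * `|g x v|)%:E)) < +oo)%E.

Definition periodic2 {N} (a : N.-tuple R) (g : fun2 N) : Prop :=
  forall i x v, g (vadd x (vscale (tnth a i) (basis i))) v = g x v.
Definition periodic3 {N} (a : N.-tuple R) (g : fun3 N) : Prop :=
  forall t, periodic2 a (fun x v => g x v t).

Definition mild_solution (P : params) (a : (pN P).-tuple R)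
    (f10 f20 : fun2 (pN P)) (f1 f2 : fun3 (pN P)) : Prop :=
  (forall x v t, 0 <= t -> 0 <= f1 x v t /\ 0 <= f2 x v t) /\
  (forall t, 0 <= t ->
     L1cell a (fun x v => (1 + vsq v) * f1 x v t) /\
     L1cell a (fun x v => (1 + vsq v) * f2 x v t)) /\
  mild_eqs f1 f2 f10 f20.

Definition initial_ok {N} (a : N.-tuple R) (f0 : fun2 N) : Prop :=
  periodic2 a f0 /\
  (forall x v, 0 <= f0 x v) /\
  L1cell a (fun x v => (1 + vsq v) * f0 x v) /\
  iint (fun x => iint (fun v => ((\1_(cell a) x : R) * f0 x v)%:E)) = 1%E /\
  (exists q A0 : R, N%:R + 2 < q /\
     forall x v, f0 x v * (1 + vnorm v `^ q) <= A0 / 2) /\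
  (exists C0 : R, 0 < C0 /\
     forall x t, C0 <= integ (fun v => f0 (vsub x (vscale t v)) v)).

Definition ae_xvt {N} (Q : N.-tuple R -> N.-tuple R -> R -> Prop) : Prop :=
  exists Z : set (N.-tuple R * N.-tuple R * R),
    measurable Z /\
    iint (fun x => iint (fun v =>
      (\int[@lebesgue_measure R]_(t in [set: R]) (\1_Z (x, v, t) : R)%:E)%E)) = 0%E /\
    forall x v t, 0 <= t -> ~ Q x v t -> Z (x, v, t).

End BGK.

(* In the mild formulation, f_k(x,v,t) is e^{-a_k} times the transported initial
   datum plus e^{-a_k} times the time integral of a gain term built from the
   nonnegative densities, hence nonnegative ratios rho_j and Maxwellians.  A
   positive initial datum makes the first term strictly positive, so f_k > 0 at
   every (x,v,t) with t >= 0, and a fortiori almost everywhere. *)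
From mathcomp Require Import all_boot all_order all_algebra all_classical all_reals all_analysis.
Set Implicit Arguments. Unset Strict Implicit. Unset Printing Implicit Defensive.
Import Order.TTheory GRing.Theory Num.Theory.
Local Open Scope ring_scope.

Lemma iint0 (R : realType) (n : nat) : iint (R:=R) (n:=n) (fun _ => 0%E) = 0%E.
Proof. by elim: n => [//|n IH] /=; rewrite IH integral0. Qed.

Lemma iint_ge0 (R : realType) (n : nat) (h : n.-tuple R -> \bar R) :
  (forall v, (0 <= h v)%E) -> (0 <= iint h)%E.
Proof.
elim: n h => [|n IH] h h_ge0 /=; first exact: h_ge0.
by apply: integral_ge0 => x _; apply: IH.
Qed.

Lemma integ_ge0 (R : realType) (N : nat) (g : N.-tuple R -> R) :
  (forall v, 0 <= g v) -> 0 <= integ g.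
Proof.
move=> g_ge0; rewrite /integ.
have -> : (fun v => (Num.max (- g v) 0)%:E) = (fun _ => 0%E).
  by apply/funext => v; congr (_%:E); apply/max_idPr; rewrite oppr_le0.
rewrite iint0 subr0; apply/fine_ge0/iint_ge0 => v.
by rewrite lee_fin le_max lexx orbT.
Qed.

Lemma integ0t_ge0 (R : realType) (t : R) (g : R -> R) :
  (forall s, 0 <= s -> 0 <= g s) -> 0 <= integ0t t g.
Proof.
move=> g_ge0; apply/fine_ge0/integral_ge0 => s /=.
by rewrite in_itv /= lee_fin => /andP[s_ge0 _]; apply: g_ge0.
Qed.

Lemma maxw_ge0 (R : realType) N (n : R) (u : N.-tuple R) T m v :
  0 <= n -> 0 <= maxw n u T m v.
Proof.
move=> n_ge0; apply: mulr_ge0; last exact: expR_ge0.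
by apply: divr_ge0 => //; apply/exprn_ge0/sqrtr_ge0.
Qed.

Lemma gain_term_ge0 (R : realType) N (c r n T m : R) (u v : N.-tuple R) :
  0 <= c -> 0 <= r -> 0 <= n -> 0 <= c * r * maxw n u T m v.
Proof. by move=> c_ge0 r_ge0 n_ge0; rewrite !mulr_ge0 ?maxw_ge0. Qed.

Lemma mild_form_gt0 (R : realType) (a f0 t : R) (gain : R -> R) :
  0 < f0 -> (forall s, 0 <= s -> 0 <= gain s) ->
  0 < expR (- a) * f0 + expR (- a) * integ0t t gain.
Proof.
move=> f0_gt0 gain_ge0; apply: ltr_pwDl; first by rewrite mulr_gt0 ?expR_gt0.
by rewrite mulr_ge0 ?expR_ge0 ?integ0t_ge0.
Qed.

Lemma ae_xvt_everywhere (R : realType) N (Q : N.-tuple R -> N.-tuple R -> R -> Prop) :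
  (forall x v t, 0 <= t -> Q x v t) -> ae_xvt Q.
Proof.
move=> HQ; exists set0; split; first exact: measurable0.
split; last by move=> x v t t_ge0 /(_ (HQ x v t t_ge0)).
have int_set0 x v : (\int[@lebesgue_measure R]_(t in [set: R])
    (\1_(@set0 (N.-tuple R * N.-tuple R * R)) (x, v, t) : R)%:E)%E = 0%E.
  by under eq_integral do rewrite indicE in_set0; exact: integral0.
by under eq_fun do under eq_fun do rewrite int_set0; rewrite !iint0.
Qed.

Section MildPositivity.
Variables (R : realType) (P : params R).
Variables (f1 f2 : fun3 R (pN P)) (f10 f20 : fun2 R (pN P)).
Hypothesis f_ge0 : forall x v t, 0 <= t -> 0 <= f1 x v t /\ 0 <= f2 x v t.
Hypothesis nt_ge0 : [/\ 0 <= nt11 P, 0 <= nt12 P, 0 <= nt21 P & 0 <= nt22 P].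
Hypothesis mild : mild_eqs f1 f2 f10 f20.
Hypothesis f10_gt0 : forall x v, 0 < f10 x v.
Hypothesis f20_gt0 : forall x v, 0 < f20 x v.

Lemma n1_ge0 x t : 0 <= t -> 0 <= n1 f1 x t.
Proof. by move=> t_ge0; apply: integ_ge0 => v; case: (f_ge0 x v t_ge0). Qed.

Lemma n2_ge0 x t : 0 <= t -> 0 <= n2 f2 x t.
Proof. by move=> t_ge0; apply: integ_ge0 => v; case: (f_ge0 x v t_ge0). Qed.

Lemma rho1_ge0 x t : 0 <= t -> 0 <= rho1 f1 f2 x t.
Proof.
by move=> t_ge0; apply: divr_ge0; [|apply: addr_ge0];
  [apply: n1_ge0 | apply: n1_ge0 | apply: n2_ge0].
Qed.

Lemma rho2_ge0 x t : 0 <= t -> 0 <= rho2 f1 f2 x t.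
Proof.
by move=> t_ge0; apply: divr_ge0; [|apply: addr_ge0];
  [apply: n2_ge0 | apply: n1_ge0 | apply: n2_ge0].
Qed.

Lemma f1_gt0 x v t : 0 <= t -> 0 < f1 x v t.
Proof.
move=> t_ge0; rewrite (mild x v t_ge0).1; apply: mild_form_gt0 => // s s_ge0.
case: nt_ge0 => nt11_ge0 nt12_ge0 _ _.
apply: mulr_ge0; last exact: expR_ge0.
by apply: addr_ge0; apply: gain_term_ge0;
  by [|apply: rho1_ge0 | apply: rho2_ge0 | apply: n1_ge0].
Qed.

Lemma f2_gt0 x v t : 0 <= t -> 0 < f2 x v t.
Proof.
move=> t_ge0; rewrite (mild x v t_ge0).2; apply: mild_form_gt0 => // s s_ge0.
case: nt_ge0 => _ _ nt21_ge0 nt22_ge0.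
apply: mulr_ge0; last exact: expR_ge0.
by apply: addr_ge0; apply: gain_term_ge0;
  by [|apply: rho1_ge0 | apply: rho2_ge0 | apply: n2_ge0].
Qed.

End MildPositivity.

Theorem mainTheorem8 (R : realType) (P : params R)
    (a : (pN P).-tuple R)
    (f10 f20 : fun2 R (pN P)) (f1 f2 : fun3 R (pN P)) :
  admissible P ->
  (forall i, 0 < tnth a i) ->
  periodic3 a f1 -> periodic3 a f2 ->
  initial_ok a f10 -> initial_ok a f20 ->
  (forall x v, 0 < f10 x v) -> (forall x v, 0 < f20 x v) ->
  mild_solution a f10 f20 f1 f2 ->
  ae_xvt (fun x v t => 0 < f1 x v t) /\ ae_xvt (fun x v t => 0 < f2 x v t).
Proof.
move=> adm _ _ _ _ _ f10_gt0 f20_gt0 [f_ge0 [_ mild]].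
have nt_ge0 : [/\ 0 <= nt11 P, 0 <= nt12 P, 0 <= nt21 P & 0 <= nt22 P].
  by case: adm => _ [_ [_ [_ [_ [_ [_ [? [? [? ?]]]]]]]]]; split; apply: ltW.
split; apply: ae_xvt_everywhere => x v t t_ge0.
- by have := f1_gt0 f_ge0 nt_ge0 mild f10_gt0 x v t_ge0.
- by have := f2_gt0 f_ge0 nt_ge0 mild f20_gt0 x v t_ge0.
Qed.
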